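(* Replacing deterministic utilities by return distributions in an IGM-satisfying factorization does not guarantee the RIGM principle. Precisely: there exist a number of agents $N$, finite action sets, and a function $\Phi:\mathbb{R}^N\to\mathbb{R}$ such that for every choice of deterministic utilities $[Q_i(\tau_i,u_i)]_{i=1}^N$ the utilities $[Q_i]_{i=1}^N$ satisfy IGM for $Q_{jt}(\boldsymbol\tau,\boldsymbol u)=\Phi(Q_1(\tau_1,u_1),\dots,Q_N(\tau_N,u_N))$, and there exist per-agent return distributions $[Z_i(\tau_i,u_i)]_{i=1}^N$ (random variables on a common probability space) such that $[Z_i]_{i=1}^N$ do not satisfy RIGM for $Z_{jt}(\boldsymbol\tau,\boldsymbol u)=\Phi(Z_1(\tau_1,u_1),\dots,Z_N(\tau_N,u_N))$ with risk metric $\psi_\alpha$. This holds both when $\psi_\alpha$ is a Value-at-Risk metric $\mathrm{VaR}_\alpha$ (for some $\alpha$) and when $\psi_\alpha$ is a distortion risk measure (for instance $\mathrm{CVaR}_\alpha$ for some $\alpha$).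
   Context: There are $N$ agents; agent $i$ has observation history $\tau_i$ and a finite action set $U_i$; write $\boldsymbol\tau=(\tau_1,\dots,\tau_N)$, $\boldsymbol u=(u_1,\dots,u_N)$. For a real random variable $Z$ with CDF $F_Z$, its quantile function is $\theta_Z(\omega)=\inf\{z\in\mathbb{R}:\omega\le F_Z(z)\}$, $\omega\in(0,1]$. Value at Risk: $\mathrm{VaR}_\alpha(Z)=\theta_Z(\alpha)$. A distortion risk measure with differentiable distortion $g:[0,1]\to[0,1]$ is $\psi(Z)=\int_0^1 g'(\omega)\theta_Z(\omega)\,d\omega$; $\mathrm{CVaR}_\alpha$ is the distortion risk measure with $g(\omega)=\min(\omega/\alpha,1)$, i.e. $\mathrm{CVaR}_\alpha(Z)=\frac1\alpha\int_0^\alpha\theta_Z(\omega)d\omega$ (so $\mathrm{CVaR}_1=\mathbb{E}$). IGM: deterministic utilities $[Q_i]$ satisfy IGM for $Q_{jt}$ under $\boldsymbol\tau$ if $\arg\max_{\boldsymbol u}Q_{jt}(\boldsymbol\tau,\boldsymbol u)=(\arg\max_{u_1}Q_1(\tau_1,u_1),\dots,\arg\max_{u_N}Q_N(\tau_N,u_N))$. RIGM: given a risk metric $\psi_\alpha$, per-agent return distributions $[Z_i(\tau_i,u_i)]$ satisfy RIGM for a joint return distribution $Z_{jt}(\boldsymbol\tau,\boldsymbol u)$ with $\psi_\alpha$ under $\boldsymbol\tau$ if $\arg\max_{\boldsymbol u}\psi_\alpha[Z_{jt}(\boldsymbol\tau,\boldsymbol u)]=(\arg\max_{u_1}\psi_\alpha[Z_1(\tau_1,u_1)],\dots,\arg\max_{u_N}\psi_\alpha[Z_N(\tau_N,u_N)])$.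 Argmax sets are assumed to be singletons (ties broken by smallest index). *)

From HB Require Import structures.
From mathcomp Require Import all_boot all_order all_algebra.
From mathcomp Require Import all_classical all_reals all_analysis.
Set Implicit Arguments. Unset Strict Implicit. Unset Printing Implicit Defensive.
Import Order.TTheory GRing.Theory Num.Theory.
Local Open Scope classical_set_scope.
Local Open Scope ring_scope.

Definition is_argmax {d} {V : orderType d} (X : finType) (f : X -> V) (x : X) : Prop :=
  (forall y, (f y <= f x)%O) /\
  (forall y, f y = f x -> (enum_rank x <= enum_rank y)%N).

Definition lex_le (N : nat) (U : 'I_N -> finType) (u v : forall i, U i) : Prop :=
  (forall i, u i = v i) \/
  exists i : 'I_N, (forall j : 'I_N, (j < i)%N -> u j = v j) /\
                   (enum_rank (u i) < enum_rank (v i))%N.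

Definition is_joint_argmax {d} {V : orderType d} (N : nat) (U : 'I_N -> finType)
  (f : (forall i, U i) -> V) (u : forall i, U i) : Prop :=
  (forall v, (f v <= f u)%O) /\ (forall v, f v = f u -> lex_le u v).

(* IGM / RIGM (for a fixed joint observation history):
   argmax of the joint utility = tuple of per-agent argmaxes. *)
Definition IGM {d} {V : orderType d} (N : nat) (U : 'I_N -> finType)
  (Qjt : (forall i, U i) -> V) (Q : forall i, U i -> V) : Prop :=
  forall u : forall i, U i,
    is_joint_argmax Qjt u <-> (forall i, is_argmax (Q i) (u i)).

Section Risk.
Context {R : realType} {dT : measure_display} {T : measurableType dT}.
Variable P : probability T R.

Definition cdf (Z : T -> R) (z : R) : R := fine (P [set w | Z w <= z]).

Definition quantile (Z : T -> R) (w : R) : R := inf [set z : R | w <= cdf Z z].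

Definition VaR (alpha : R) (Z : T -> R) : \bar R := (quantile Z alpha)%:E.

Definition CVaR (alpha : R) (Z : T -> R) : \bar R :=
  (alpha^-1)%:E *
  (\int[@lebesgue_measure R]_(w in [set w : R | (0 < w <= alpha)%R]) (quantile Z w)%:E)%E.
End Risk.

Definition risk_metric (R : realType) :=
  forall (d : measure_display) (T : measurableType d), probability T R -> (T -> R) -> \bar R.

Definition IGM_not_RIGM (R : realType) (psi : risk_metric R) : Prop :=
  exists (N : nat) (U : 'I_N -> finType) (Phi : ('I_N -> R) -> R),
    (forall Q : forall i, U i -> R,
        IGM (fun u => Phi (fun i => Q i (u i))) Q) /\
    exists (d : measure_display) (T : measurableType d) (P : probability T R)
           (Z : forall i, U i -> T -> R),
      (forall i (a : U i), measurable_fun setT (Z i a)) /\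
      (forall u : forall i, U i,
          measurable_fun setT (fun w => Phi (fun i => Z i (u i) w))) /\
      ~ IGM (fun u => psi d T P (fun w => Phi (fun i => Z i (u i) w)))
            (fun i a => psi d T P (Z i a)).

(* For an additive factorisation Q_jt = Q_1 + ... + Q_N the maximisers of Q_jt
   are exactly the tuples of individual maximisers, and the lexicographically
   smallest of them is the tuple of smallest ones, so IGM holds for every choice
   of utilities.  Risk metrics are not additive, though: on a fair coin both
   VaR_{1/2} and CVaR_{1/2} return the worse of the two outcomes.  Two actions
   that are individually risky but lose on opposite faces of the coin hedge each
   other, so their joint return beats the safe joint action that each agent
   chooses on its own. *)

From Pilot Require Import Defs.
From HB Require Import structures.
From mathcomp Require Import all_boot all_order all_algebra.
From mathcomp Require Import all_classical all_reals all_analysis.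
From mathcomp Require Import lra.
Import Order.TTheory GRing.Theory Num.Theory.
Local Open Scope classical_set_scope.
Local Open Scope ring_scope.

Section AdditiveFactorization.
Variables (R : realDomainType) (N : nat) (U : 'I_N -> finType).
Implicit Types (u v : forall i, U i) (Q : forall i, U i -> R).

Lemma sum_dfwithB Q u i (y : U i) :
  \sum_j Q j (dfwith u i y j) - \sum_j Q j (u j) = Q i y - Q i (u i).
Proof.
rewrite (bigD1 i) //= dfwithin [X in _ - X](bigD1 i) //=.
rewrite (eq_bigr (fun j => Q j (u j))) => [|j ji]; last by rewrite dfwithout // eq_sym.
by rewrite opprD addrACA subrr addr0.
Qed.

Lemma lex_le_of_rank_le u v :
  (forall i, (enum_rank (u i) <= enum_rank (v i))%N) -> lex_le u v.
Proof.
move=> le_uv; have [k0 neq_k0 | eq_uv] := pickP (fun k => u k != v k); last first.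
  by left => i; apply/eqP; exact: negbFE (eq_uv i).
right; case: (arg_minnP (P := fun k => u k != v k) val neq_k0) => k neq_k k_min.
exists k; split.
  by move=> j lt_jk; apply/eqP; apply: contraTT lt_jk => /k_min; rewrite -leqNgt.
rewrite ltn_neqAle le_uv andbT; apply: contra neq_k => /eqP/val_inj/enum_rank_inj.
by move=> ->.
Qed.

Lemma IGM_sum Q : IGM (fun u => \sum_i Q i (u i)) Q.
Proof.
move=> u; split => [[u_max u_lex] i | u_argmax].
  split => [y | y eq_y].
    by rewrite -subr_le0 -(sum_dfwithB Q u) subr_le0; exact: u_max.
  have /u_lex[eq_uv | [k [_]]] : \sum_j Q j (dfwith u i y j) = \sum_j Q j (u j).
  - by apply/eqP; rewrite -subr_eq0 sum_dfwithB eq_y subrr.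
  - by rewrite (eq_uv i) dfwithin.
  - by case: dfwithP => [/ltnW | j _] //; rewrite ltnn.
have le_Q i a : Q i a <= Q i (u i) by exact: (u_argmax i).1.
split => [v | v eq_v]; first exact: ler_sum.
apply: lex_le_of_rank_le => i; apply: (u_argmax i).2; apply/eqP.
rewrite eq_sym -subr_eq0; apply/eqP; move: i isT; apply: psumr_eq0P.
  by move=> i _; rewrite subr_ge0.
by rewrite sumrB eq_v subrr.
Qed.

End AdditiveFactorization.

Section FairCoin.
Variable R : realType.
Implicit Type Y : bool -> R.

Definition fair_coin : probability bool R := bernoulli_prob (2^-1 : R).

Lemma cdf_fair_coin Y z :
  Defs.cdf fair_coin Y z = 2^-1 * (Y true <= z)%R%:R + (1 - 2^-1) * (Y false <= z)%R%:R.
Proof.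
rewrite /Defs.cdf /fair_coin /= bernoulli_probE; last by apply/andP; split; lra.
rewrite !diracE /= /unstable.onem.
have mem_le b : (b \in [set w | Y w <= z]) = (Y b <= z).
  by apply/idP/idP => [/set_mem | /mem_set].
by rewrite !mem_le.
Qed.

Lemma quantile_fair_coin Y w : 0 < w <= 2^-1 ->
  quantile fair_coin Y w = Num.min (Y true) (Y false).
Proof.
move=> /andP[w_gt0 w_le]; rewrite /quantile.
suff -> : [set z | w <= Defs.cdf fair_coin Y z] = `[Num.min (Y true) (Y false), +oo[%classic.
  by rewrite inf_itv.
apply/seteqP; split => z /=; rewrite in_itv /= andbT ge_min cdf_fair_coin;
  by case: (Y true <= z); case: (Y false <= z) => /=; lra.
Qed.

Lemma VaR_fair_coin Y : VaR fair_coin 2^-1 Y = (Num.min (Y true) (Y false))%:E.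
Proof. by rewrite /VaR quantile_fair_coin //; apply/andP; split; lra. Qed.

Lemma CVaR_fair_coin Y : CVaR fair_coin 2^-1 Y = (Num.min (Y true) (Y false))%:E.
Proof.
rewrite /CVaR.
have -> : [set w : R | 0 < w <= 2^-1] = `]0, 2^-1]%classic.
  by apply/seteqP; split => x /=; rewrite in_itv.
rewrite (eq_integral (cst (Num.min (Y true) (Y false))%:E)); last first.
  by move=> x; rewrite inE /= in_itv /= => x_in; rewrite quantile_fair_coin.
rewrite integral_cst //= lebesgue_measure_itv /= lte_fin ifT; last lra.
rewrite -EFinD -!EFinM subr0 mulrCA mulVf ?mulr1 //; lra.
Qed.

End FairCoin.

Section HedgingCounterexample.
Variable R : realType.

Definition hedged_returns (i : 'I_2) (a w : bool) : R :=
  if a then (if w (+) (i == ord0) then 2 else -1) else 0.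

Lemma IGM_not_RIGM_of_fair_coin_min (psi : risk_metric R) :
  (forall Y : bool -> R, psi _ _ (fair_coin R) Y = (Num.min (Y true) (Y false))%:E) ->
  IGM_not_RIGM psi.
Proof.
move=> psiE; exists 2, (fun _ => bool : finType), (fun x => \sum_i x i).
split=> [Q | ]; first exact: IGM_sum.
exists _, bool, (fair_coin R), hedged_returns; split=> [// | ]; split=> [// | RIGM].
have risky i : psi _ _ (fair_coin R) (hedged_returns i true) = (-1)%:E.
  rewrite psiE /hedged_returns; congr EFin.
  by case: (i == ord0) => /=; rewrite minEle; case: ifP; lra.
have safe i : psi _ _ (fair_coin R) (hedged_returns i false) = 0%:E.
  by rewrite psiE minxx.
have hedged : psi _ _ (fair_coin R) (fun w => \sum_i hedged_returns i true w) = 1%:E.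
  rewrite psiE !big_ord_recr !big_ord0 /hedged_returns /=; congr EFin.
  by rewrite minEle; case: ifP; lra.
have joint_safe : psi _ _ (fair_coin R) (fun w => \sum_i hedged_returns i false w) = 0%:E.
  by rewrite psiE big1_eq minxx.
have false_argmax i : is_argmax (fun a => psi _ _ (fair_coin R) (hedged_returns i a)) false.
  split=> [[] | [] //]; rewrite /= ?risky ?safe ?lee_fin //.
  by case=> /eqP; rewrite oppr_eq0 oner_eq0.
have [joint_max _] := (RIGM (fun _ => false)).2 false_argmax.
by move: (joint_max (fun _ => true)); rewrite /= hedged joint_safe lee_fin; lra.
Qed.

End HedgingCounterexample.

Theorem theorem1 (R : realType) :
  (exists alpha : R, 0 < alpha <= 1 /\
     IGM_not_RIGM (fun d T P Z => @VaR R d T P alpha Z)) /\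
  (exists alpha : R, 0 < alpha <= 1 /\
     IGM_not_RIGM (fun d T P Z => @CVaR R d T P alpha Z)).
Proof.
have half_in : 0 < (2^-1 : R) <= 1 by apply/andP; split; lra.
split; exists 2^-1; split=> //; apply: IGM_not_RIGM_of_fair_coin_min => Y.
- exact: VaR_fair_coin.
- exact: CVaR_fair_coin.
Qed.
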